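(* Assume the Setting below. Let $(x_p)\subset\Omega$ be such that $\mu_p^{-2}:=p|u_p(x_p)|^{p-1}\to+\infty$, and assume that the rescaled functions $$v_p(x):=\frac{p}{u_p(x_p)}\left(u_p(x_p+\mu_px)-u_p(x_p)\right)$$ converge to $U(x)=\log\left(\frac{1}{1+\frac18|x|^2}\right)^2$ in $C^1_{loc}\left(\mathbb{R}^2\setminus\{-\lim_p \frac{x_p}{\mu_p}\}\right)$ as $p\to+\infty$. Then $\frac{|x_p|}{\mu_p}\to0$ as $p\to+\infty$. Consequently $v_p\to U$ in $C^1_{loc}(\mathbb{R}^2\setminus\{0\})$.
   Context: Setting: $\Omega\subset\mathbb{R}^2$ is a simply connected bounded smooth domain invariant under a cyclic group $G$ of rotations about the origin $O$, with $|G|\ge 4e$. $(u_p)_{p>1}$ is a family of sign-changing solutions of $-\Delta u=|u|^{p-1}u$ in $\Omega$, $u=0$ on $\partial\Omega$, which are $G$-symmetric ($u_p\circ g=u_p$ for $g\in G$), have exactly two nodal regions, whose nodal line $NL_p:=\{x\in\Omega:u_p(x)=0\}$ satisfies $NL_p\cap\partial\Omega=\emptyset$, $O\notin NL_p$, and with $p\int_\Omega|\nabla u_p|^2\le\alpha\,8\pi e$ for some $\alpha<5$ and $p$ large; $\|u_p\|_\infty=\|u_p^+\|_\infty$. Limits are along a sequence $p\to+\infty$ along which $x_p/\mu_p$ converges. *)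

From mathcomp Require Import all_boot all_order all_algebra.
From mathcomp Require Import all_classical all_reals all_analysis.
Import Order.TTheory GRing.Theory Num.Theory numFieldNormedType.Exports.

Set Implicit Arguments.
Unset Strict Implicit.
Unset Printing Implicit Defensive.

Local Open Scope classical_set_scope.
Local Open Scope ring_scope.

Definition e1 {R : realType} : R * R := (1, 0).
Definition e2 {R : realType} : R * R := (0, 1).
Definition d1 {R : realType} (f : R * R -> R) : R * R -> R := 'D_e1 f.
Definition d2 {R : realType} (f : R * R -> R) : R * R -> R := 'D_e2 f.

Definition enorm {R : realType} (x : R * R) : R := Num.sqrt (x.1 ^+ 2 + x.2 ^+ 2).

Definition lap {R : realType} (f : R * R -> R) (x : R * R) : R :=
  d1 (d1 f) x + d2 (d2 f) x.

Definition rot {R : realType} (t : R) (x : R * R) : R * R :=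
  (cos t * x.1 - sin t * x.2, sin t * x.1 + cos t * x.2).

(* the cyclic group of rotations of order n about the origin
   (the unique subgroup of SO(2) of order n) *)
Definition rot_group {R : realType} (n : nat) : set (R * R -> R * R) :=
  [set rot (2 * pi * k%:R / n%:R) | k in [set: nat]].

Fixpoint iterD {R : realType} (vs : seq (R * R)) (f : R * R -> R) : R * R -> R :=
  match vs with
  | [::] => f
  | v :: vs' => 'D_v (iterD vs' f)
  end.
Definition smooth {R : realType} (f : R * R -> R) : Prop :=
  forall (vs : seq (R * R)) (x : R * R), differentiable (iterD vs f) x.

Definition bounded_smooth_domain {R : realType} (O : set (R * R)) : Prop :=
  (exists M : R, forall x, O x -> enorm x <= M) /\
  exists phi : R * R -> R, smooth phi /\
    O = [set x | phi x < 0] /\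
    (forall x, phi x = 0 -> (d1 phi x, d2 phi x) <> (0, 0)).

Definition I01 {R : realType} : set R := [set t : R | 0 <= t <= 1].

Definition simply_connected {R : realType} (O : set (R * R)) : Prop :=
  O !=set0 /\ connected O /\
  forall g : R -> R * R,
    {within I01, continuous g} -> (forall t, I01 t -> O (g t)) ->
    g 0 = g 1 ->
    exists H : R * R -> R * R,
      {within I01 `*` I01, continuous H} /\
      (forall s t, I01 s -> I01 t -> O (H (s, t))) /\
      (forall t, I01 t -> H (0, t) = g t /\ H (1, t) = g 0) /\
      (forall s, I01 s -> H (s, 0) = g 0 /\ H (s, 1) = g 0).

Definition bdry {R : realType} (O : set (R * R)) : set (R * R) :=
  closure O `\` interior O.

Definition C2_on {R : realType} (O : set (R * R)) (u : R * R -> R) : Prop :=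
  (forall x, O x -> differentiable u x /\ differentiable (d1 u) x /\
                    differentiable (d2 u) x) /\
  {within O, continuous (d1 (d1 u))} /\ {within O, continuous (d1 (d2 u))} /\
  {within O, continuous (d2 (d1 u))} /\ {within O, continuous (d2 (d2 u))} /\
  {within closure O, continuous u}.

Definition is_solution {R : realType} (O : set (R * R)) (p : R)
    (u : R * R -> R) : Prop :=
  C2_on O u /\
  (forall x, O x -> - lap u x = `|u x| `^ (p - 1) * u x) /\
  (forall x, bdry O x -> u x = 0).

Definition nodal_line {R : realType} (O : set (R * R)) (u : R * R -> R) :
  set (R * R) := [set x | O x /\ u x = 0].

Definition nodal_set_compl {R : realType} (O : set (R * R)) (u : R * R -> R) :
  set (R * R) := [set x | O x /\ u x <> 0].

Definition two_nodal_regions {R : realType} (O : set (R * R))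
    (u : R * R -> R) : Prop :=
  let N := nodal_set_compl O u in
  exists a b, N a /\ N b /\
    connected_component N a <> connected_component N b /\
    forall c, N c -> connected_component N c = connected_component N a \/
                     connected_component N c = connected_component N b.

Definition sign_changing {R : realType} (O : set (R * R)) (u : R * R -> R) :=
  (exists x, O x /\ 0 < u x) /\ (exists y, O y /\ u y < 0).

Definition dirichlet {R : realType} (O : set (R * R)) (u : R * R -> R) : \bar R :=
  (\int[(@lebesgue_measure R \x @lebesgue_measure R)]_(x in O)
      ((d1 u x) ^+ 2 + (d2 u x) ^+ 2)%:E)%E.

Definition Setting {R : realType} (O : set (R * R)) (n : nat) (alpha : R)
    (u : R -> R * R -> R) : Prop :=
  simply_connected O /\ bounded_smooth_domain O /\
  4 * expR 1 <= (n%:R : R) /\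
  (forall g, @rot_group R n g -> g @` O = O) /\
  alpha < 5 /\
  (forall p, 1 < p ->
     is_solution O p (u p) /\
     sign_changing O (u p) /\
     (forall g, @rot_group R n g -> forall x, O x -> u p (g x) = u p x) /\
     two_nodal_regions O (u p) /\
     closure (nodal_line O (u p)) `&` bdry O = set0 /\
     ~ nodal_line O (u p) 0 /\
     sup [set `|u p x| | x in O] = sup [set Num.max (u p x) 0 | x in O]) /\
  (exists p0 : R, forall p, p0 < p ->
     (p%:E * dirichlet O (u p) <= (alpha * 8 * pi * expR 1)%:E)%E).

Definition mu {R : realType} (u : R -> R * R -> R) (pn : nat -> R)
    (x : nat -> R * R) (k : nat) : R :=
  (pn k * `|u (pn k) (x k)| `^ (pn k - 1)) `^ (- (1 / 2)).

Definition vresc {R : realType} (u : R -> R * R -> R) (pn : nat -> R)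
    (x : nat -> R * R) (k : nat) (y : R * R) : R :=
  pn k / u (pn k) (x k) *
    (u (pn k) (x k + mu u pn x k *: y) - u (pn k) (x k)).

Definition resc_dom {R : realType} (O : set (R * R)) (u : R -> R * R -> R)
    (pn : nat -> R) (x : nat -> R * R) (k : nat) : set (R * R) :=
  [set y | O (x k + mu u pn x k *: y)].

Definition Ulim {R : realType} (y : R * R) : R :=
  ln (((1 + enorm y ^+ 2 / 8)^-1) ^+ 2).

Definition C1loc_cvg {R : realType} (f : nat -> R * R -> R) (g : R * R -> R)
    (D : set (R * R)) (Dn : nat -> set (R * R)) : Prop :=
  forall K : set (R * R), compact K -> K `<=` D ->
    (\forall k \near \oo, K `<=` Dn k) /\
    forall eps : R, 0 < eps -> \forall k \near \oo, forall y, K y ->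
      `|f k y - g y| < eps /\ `|d1 (f k) y - d1 g y| < eps /\
      `|d2 (f k) y - d2 g y| < eps.

(* By the G-symmetry, u_p(g x_p) = u_p(x_p) for the rotation g of angle
   2pi/|G|, so v_p vanishes at y_p := (g x_p - x_p)/mu_p.  If x_p/mu_p -> xi
   with xi <> 0, then y_p -> g xi - xi, a point that is neither 0 (a
   nontrivial rotation fixes only the origin) nor the singular point -xi
   (since g xi <> 0).  Locally uniform convergence then forces U to be close
   to 0 near g xi - xi, whereas U is bounded away from 0 there. *)

From mathcomp Require Import all_boot all_order all_algebra.
From mathcomp Require Import all_classical all_reals all_analysis.
From mathcomp Require Import ring lra.
Import Order.TTheory GRing.Theory Num.Theory numFieldNormedType.Exports.
Local Open Scope classical_set_scope.
Local Open Scope ring_scope.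

Section EuclideanNorm.
Context {R : realType}.
Implicit Types (y : R * R) (c : R).

Lemma enorm_ge0 y : 0 <= enorm y.
Proof. exact: sqrtr_ge0. Qed.

Lemma enorm_sqr y : enorm y ^+ 2 = y.1 ^+ 2 + y.2 ^+ 2.
Proof. by rewrite sqr_sqrtr // addr_ge0 ?sqr_ge0. Qed.

Lemma enorm0 : enorm (0 : R * R) = 0.
Proof. by rewrite /enorm /= expr0n addr0 sqrtr0. Qed.

Lemma enorm_eq0 y : enorm y = 0 -> y = 0.
Proof.
move=> /(congr1 (fun r => r ^+ 2)); rewrite enorm_sqr expr0n /=.
move/eqP; rewrite paddr_eq0 ?sqr_ge0 // !sqrf_eq0 => /andP[/eqP h1 /eqP h2].
by rewrite [y]surjective_pairing h1 h2.
Qed.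

Lemma enormZ c y : enorm (c *: y) = `|c| * enorm y.
Proof. by rewrite /enorm /= !exprMn -mulrDr sqrtrM ?sqr_ge0 // sqrtr_sqr. Qed.

Lemma norm_le_enorm y : `|y| <= enorm y.
Proof.
rewrite prod_normE /enorm ge_max -!sqrtr_sqr.
by rewrite !ler_wsqrtr ?lerDl ?lerDr ?sqr_ge0.
Qed.

Lemma enorm_le_norm y : enorm y <= 2 * `|y|.
Proof.
rewrite -ler_sqr ?nnegrE ?enorm_ge0 ?mulr_ge0 // enorm_sqr exprMn prod_normE.
set m := Num.max _ _.
have m1 : `|y.1| <= m by rewrite le_max lexx.
have m2 : `|y.2| <= m by rewrite le_max lexx orbT.
rewrite -[y.1 ^+ 2]real_normK ?num_real // -[y.2 ^+ 2]real_normK ?num_real //.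
have := normr_ge0 y.1; have := normr_ge0 y.2; nra.
Qed.

Lemma enorm_cvg0 {T : Type} {F : set_system T} {FF : Filter F}
    (z : T -> R * R) :
  z @ F --> (0 : R * R) -> enorm (z t) @[t --> F] --> 0.
Proof.
move=> /cvgr0Pnorm_le z0; apply/cvgr0Pnorm_le => e e0.
near=> t; rewrite ger0_norm ?enorm_ge0 //.
apply: le_trans (enorm_le_norm _) _; rewrite -ler_pdivlMl //.
by near: t; apply: z0; rewrite mulr_gt0 ?invr_gt0.
Unshelve. all: by end_near.
Qed.

End EuclideanNorm.

Section Rotations.
Context {R : realType}.
Implicit Types (t c : R) (y : R * R).

Lemma rotZ t c y : rot t (c *: y) = c *: rot t y.
Proof. by rewrite /rot /=; congr pair; rewrite /GRing.scale /=; ring. Qed.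

Lemma enorm_rot t y : enorm (rot t y) = enorm y.
Proof. by rewrite /enorm; congr Num.sqrt; rewrite -[RHS]mul1r -(cos2Dsin2 t) /=; ring. Qed.

Lemma rot_eq0 t y : rot t y = 0 -> y = 0.
Proof. by move=> h; apply: enorm_eq0; rewrite -(enorm_rot t) h enorm0. Qed.

Lemma rot_fixed0 t y : sin t != 0 -> rot t y = y -> y = 0.
Proof.
move=> st fix_y; apply: enorm_eq0.
have hd : enorm (rot t y - y) ^+ 2 =
    (sin t ^+ 2 + (cos t - 1) ^+ 2) * enorm y ^+ 2.
  by rewrite !enorm_sqr /=; ring.
have k0 : 0 < sin t ^+ 2 + (cos t - 1) ^+ 2.
  by apply: ltr_wpDr; rewrite ?sqr_ge0 ?exprn_even_gt0.
move: hd; rewrite fix_y subrr enorm0 expr0n /= => /esym/eqP.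
by rewrite mulf_eq0 (gt_eqF k0) sqrf_eq0 => /eqP.
Qed.

Lemma continuous_rot t : continuous (rot t).
Proof.
move=> y.
have c1 : (fun z : R * R => z.1) @ y --> y.1 by exact: cvg_fst.
have c2 : (fun z : R * R => z.2) @ y --> y.2 by exact: cvg_snd.
have h1 : (fun z : R * R => cos t * z.1 - sin t * z.2) @ y -->
    cos t * y.1 - sin t * y.2.
  by apply: cvgB; apply: cvgM => //; exact: cvg_cst.
have h2 : (fun z : R * R => sin t * z.1 + cos t * z.2) @ y -->
    sin t * y.1 + cos t * y.2.
  by apply: cvgD; apply: cvgM => //; exact: cvg_cst.
exact: (cvg_pair h1 h2).
Qed.

Lemma rot_group_gen (n : nat) : rot_group n (rot (2 * pi / n%:R : R)).
Proof. by exists 1%N => //; rewrite mulr1. Qed.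

Lemma sin_2pi_div_gt0 (n : nat) : 2 < (n%:R : R) -> 0 < sin (2 * pi / n%:R : R).
Proof.
move=> n2; have pi0 := pi_gt0 R; apply: sin_gt0_pi; apply/andP; split.
  by rewrite divr_gt0 ?mulr_gt0; lra.
by rewrite ltr_pdivrMr; nra.
Qed.

End Rotations.

Section Blowup.
Context {R : realType}.

Lemma closed_ball_pairE (a : R * R) (r : R) : 0 < r ->
  closed_ball a r = closed_ball a.1 r `*` closed_ball a.2 r.
Proof.
move=> r0; rewrite !closed_ballE //; apply/seteqP; split=> y /=;
  by rewrite /closed_ball_ /= prod_normE ge_max => /andP.
Qed.

Lemma closed_ball_pair_compact (a : R * R) (r : R) : 0 < r ->
  compact (closed_ball a r).
Proof.
move=> r0; rewrite closed_ball_pairE //.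
by apply: compact_setX; exact: closed_ballR_compact.
Qed.

Lemma C1loc_cvg_zeros {f : nat -> R * R -> R} {g : R * R -> R}
    {D : set (R * R)} {Dn : nat -> set (R * R)} {K : set (R * R)}
    {a : R * R} {y : nat -> R * R} :
  C1loc_cvg f g D Dn -> compact K -> K `<=` D -> nbhs a K ->
  y @ \oo --> a -> (forall k, f k (y k) = 0) ->
  forall eps, 0 < eps -> exists2 b, K b & `|g b| < eps.
Proof.
move=> hfg cK KD aK ya fy0 eps eps0.
have [_ /(_ eps eps0) unif] := hfg K cK KD.
have [k [/(_ (y k)) near_g Kyk]] := filter_ex (filterI unif (ya K aK)).
by exists (y k) => //; have [] := near_g Kyk; rewrite fy0 sub0r normrN.
Qed.

Lemma Ulim_le_neg (m : R) : 0 < m ->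
  exists2 eps : R, 0 < eps & forall y, m <= enorm y -> Ulim y <= - eps.
Proof.
move=> m0; set q := (1 + m ^+ 2 / 8)^-1.
have q0 : 0 < q by rewrite invr_gt0; have := sqr_ge0 m; lra.
have q1 : q < 1 by rewrite invf_lt1; have := exprn_gt0 2 m0; lra.
exists (- ln (q ^+ 2)).
  by rewrite oppr_gt0 ln_lt0 // exprn_gt0 //= expr_lt1 //; lra.
move=> y my; rewrite opprK /Ulim.
have m2 : m ^+ 2 <= enorm y ^+ 2 by rewrite ler_sqr ?nnegrE ?enorm_ge0 //; lra.
set w := (1 + enorm y ^+ 2 / 8)^-1.
have w0 : 0 < w by rewrite invr_gt0; have := sqr_ge0 (enorm y); lra.
have wq : w <= q.
  by rewrite lef_pV2 ?posrE; [lra | |]; have := sqr_ge0 m; lra.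
by rewrite ler_ln ?posrE ?exprn_gt0 // ler_sqr ?nnegrE; lra.
Qed.

Lemma blowup_center_eq0 {f : nat -> R * R -> R} {Dn : nat -> set (R * R)}
    {xi : R * R} {t : R} {z : nat -> R * R} :
  sin t != 0 -> C1loc_cvg f Ulim (~` [set - xi]) Dn -> z @ \oo --> xi ->
  (forall k, f k (rot t (z k) - z k) = 0) -> xi = 0.
Proof.
move=> st hC zxi fz0; have [//|xi0] := eqVneq xi 0; exfalso.
set a := rot t xi - xi.
have a0 : 0 < `|a|.
  by rewrite normr_gt0; apply: contra_neq xi0 => /subr0_eq; exact: rot_fixed0.
have axi0 : 0 < `|a + xi|.
  by rewrite normr_gt0 subrK; apply: contra_neq xi0; exact: rot_eq0.
set r := Num.min `|a| `|a + xi| / 2.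
have r0 : 0 < r by rewrite divr_gt0 // lt_min a0 axi0.
have ra : r <= `|a| / 2 by rewrite ler_pM2r // ge_min lexx.
have raxi : r <= `|a + xi| / 2 by rewrite ler_pM2r // ge_min lexx orbT.
set K := closed_ball a r.
have Kr b : K b -> `|a - b| <= r by rewrite /K closed_ballE.
have KD : K `<=` ~` [set - xi].
  by move=> b /Kr + /= bxi; rewrite bxi opprK; lra.
have Kfar b : K b -> `|a| / 2 <= enorm b.
  move=> /Kr ab; apply: le_trans (norm_le_enorm b).
  by have := ler_normD (a - b) b; rewrite subrK; lra.
have aK : nbhs a K by apply/nbhs_closedballP; exists (PosNum r0).
have cK : compact K by exact: closed_ball_pair_compact.
have za : rot t (z k) - z k @[k --> \oo] --> a.
  by apply: cvgB => //; exact: continuous_cvg (continuous_rot t xi) zxi.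
have [eps eps0 Uneg] := Ulim_le_neg _ (divr_gt0 a0 (ltr0n R 2)).
have [b Kb] := C1loc_cvg_zeros hC cK KD aK za fz0 eps eps0.
by have := Uneg b (Kfar b Kb); rewrite ltr_norml; lra.
Qed.

End Blowup.

(* Also covers the junk case mu_p = 0, where v_p vanishes identically. *)
Lemma vresc_eq0 (R : realType) (u : R -> R * R -> R) (pn : nat -> R)
    (x : nat -> R * R) (k : nat) (w : R * R) :
  u (pn k) (x k + w) = u (pn k) (x k) ->
  vresc u pn x k ((mu u pn x k)^-1 *: w) = 0.
Proof.
rewrite /vresc scalerA; have [->|mu0] := eqVneq (mu u pn x k) 0.
  by rewrite mul0r scale0r addr0 subrr mulr0.
by rewrite mulfV // scale1r => ->; rewrite subrr mulr0.
Qed.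

Theorem proposition3p8 (R : realType) (O : set (R * R)) (n : nat) (alpha : R)
    (u : R -> R * R -> R) (pn : nat -> R) (x : nat -> R * R) (xi : R * R) :
  Setting O n alpha u ->
  (forall k, 1 < pn k) -> pn @ \oo --> +oo ->
  (forall k, O (x k)) ->
  (fun k => pn k * `|u (pn k) (x k)| `^ (pn k - 1)) @ \oo --> +oo ->
  (fun k => (mu u pn x k)^-1 *: x k) @ \oo --> xi ->
  C1loc_cvg (vresc u pn x) Ulim (~` [set - xi]) (resc_dom O u pn x) ->
  (fun k => enorm (x k) / mu u pn x k) @ \oo --> 0 /\
  C1loc_cvg (vresc u pn x) Ulim (~` [set 0]) (resc_dom O u pn x).
Proof.
move=> [_ [_ [n_ge [_ [_ [sol _]]]]]] p_gt1 _ xO _ zxi hC1.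
set t : R := 2 * pi / n%:R.
have n_gt2 : 2 < (n%:R : R) by have := @pexpR_gt1 R 1 ltr01; lra.
have st : sin t != 0 by rewrite gt_eqF // sin_2pi_div_gt0.
have u_rot k : u (pn k) (x k + (rot t (x k) - x k)) = u (pn k) (x k).
  have [_ [_ [u_sym _]]] := sol _ (p_gt1 k).
  by rewrite addrC subrK; apply: u_sym (xO k); exact: rot_group_gen.
have v_rot k : vresc u pn x k (rot t ((mu u pn x k)^-1 *: x k) -
                               (mu u pn x k)^-1 *: x k) = 0.
  by rewrite rotZ -scalerBr; exact: vresc_eq0.
have xi0 := blowup_center_eq0 st hC1 zxi v_rot.
rewrite xi0 oppr0 in zxi hC1; split => //.
have -> : (fun k => enorm (x k) / mu u pn x k) =
          (fun k => enorm ((mu u pn x k)^-1 *: x k)).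
  by apply: funext => k; rewrite enormZ ger0_norm ?invr_ge0 ?powR_ge0 // mulrC.
exact: enorm_cvg0.
Qed.
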